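(* Let $n\ge 1$ and let $\Psi:[0,1]^4\to\mathbb{R}_+$ be a performance metric that satisfies TP monotonicity (defined in the context). Then $\Psi$ satisfies the probability ranking principle: for any set $\mathbf{x}=\{x_1,\dots,x_n\}$ of instances and any conditional label distribution of the form $\mathbb{P}(\mathbf{y}\mid\mathbf{x})=\prod_{i=1}^n \eta_i^{y_i}(1-\eta_i)^{1-y_i}$ with $\eta_i=\mathbb{P}(Y=1\mid x_i)\in[0,1]$, every maximizer $\mathbf{s}^*\in\arg\max_{\mathbf{s}\in\{0,1\}^n}U_\Psi(\mathbf{s};\mathbb{P})$ satisfies \[\min\{\eta_i : s_i^*=1\}\ \ge\ \max\{\eta_i : s_i^*=0\}.\]
   Context: Labels are binary, $\mathcal{Y}=\{0,1\}$, and instance–label pairs are drawn i.i.d. from a distribution $\mathbb{P}$, so that given instances $\mathbf{x}$ the labels are conditionally independent with $\mathbb{P}(Y=1\mid x_i)=\eta_i$. For predictions $\mathbf{s}\in\{0,1\}^n$ and labels $\mathbf{y}\in\{0,1\}^n$ the empirical confusion matrix has entries $\widehat{TP}=\frac1n\sum_i s_iy_i$, $\widehat{TN}=\frac1n\sum_i(1-s_i)(1-y_i)$, $\widehat{FP}=\frac1n\sum_i s_i(1-y_i)$, $\widehat{FN}=\frac1n\sum_i(1-s_i)y_i$. A metric $\Psi:[0,1]^4\to\mathbb{R}_+$ is evaluated on these four entries, written $\Psi(\mathbf{s},\mathbf{y})$. The (decision-theoretic) utility is $U_\Psi(\mathbf{s};\mathbb{P})=\mathbb{E}_{\mathbf{y}\sim\mathbb{P}(\cdot\mid\mathbf{x})}\Psi(\mathbf{s},\mathbf{y})$.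 Writing $u=\widehat{TP}(\mathbf{s},\mathbf{y})$, $v=v(\mathbf{s})=\frac1n\sum_i s_i$, $p=p(\mathbf{y})=\frac1n\sum_i y_i$, the confusion matrix is determined by $(u,v,p)$ (namely $\widehat{FP}=v-u$, $\widehat{FN}=p-u$, $\widehat{TN}=1-v-p+u$), so there is a function $\Phi:[0,1]^3\to\mathbb{R}_+$ with $\Psi(\mathbf{s},\mathbf{y})=\Phi(\widehat{TP}(\mathbf{s},\mathbf{y}),v(\mathbf{s}),p(\mathbf{y}))$. $\Psi$ is called TP monotonic if whenever $u_1>u_2$ and $v,p$ are fixed, $\Phi(u_1,v,p)>\Phi(u_2,v,p)$. *)

From HB Require Import structures.
From mathcomp Require Import all_boot all_order all_algebra.
Set Implicit Arguments. Unset Strict Implicit. Unset Printing Implicit Defensive.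
Import Order.TTheory GRing.Theory Num.Theory.
Local Open Scope ring_scope.

Section Defs.
Variable R : realFieldType.

(* A metric Psi is a function of (TP, TN, FP, FN). *)
Definition metric := R -> R -> R -> R -> R.

Definition in01 (a : R) := 0 <= a <= 1.

Definition TPhat n (s y : {ffun 'I_n -> bool}) : R :=
  (n%:R)^-1 * \sum_(i < n) (s i && y i)%:R.
Definition TNhat n (s y : {ffun 'I_n -> bool}) : R :=
  (n%:R)^-1 * \sum_(i < n) (~~ s i && ~~ y i)%:R.
Definition FPhat n (s y : {ffun 'I_n -> bool}) : R :=
  (n%:R)^-1 * \sum_(i < n) (s i && ~~ y i)%:R.
Definition FNhat n (s y : {ffun 'I_n -> bool}) : R :=
  (n%:R)^-1 * \sum_(i < n) (~~ s i && y i)%:R.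

Definition Psi_eval (Psi : metric) n (s y : {ffun 'I_n -> bool}) : R :=
  Psi (TPhat s y) (TNhat s y) (FPhat s y) (FNhat s y).

Definition Phi (Psi : metric) (u v p : R) : R :=
  Psi u (1 - v - p + u) (v - u) (p - u).

Definition valid_uvp (u v p : R) : Prop :=
  [/\ in01 u, in01 (1 - v - p + u), in01 (v - u) & in01 (p - u)].

Definition TP_monotonic (Psi : metric) : Prop :=
  forall u1 u2 v p : R, in01 v -> in01 p ->
    valid_uvp u1 v p -> valid_uvp u2 v p ->
    u1 > u2 -> Phi Psi u1 v p > Phi Psi u2 v p.

Definition metric_nonneg (Psi : metric) : Prop :=
  forall a b c d : R, in01 a -> in01 b -> in01 c -> in01 d -> 0 <= Psi a b c d.

Definition label_prob n (eta : 'I_n -> R) (y : {ffun 'I_n -> bool}) : R :=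
  \prod_(i < n) (if y i then eta i else 1 - eta i).

Definition utility (Psi : metric) n (eta : 'I_n -> R) (s : {ffun 'I_n -> bool}) : R :=
  \sum_(y : {ffun 'I_n -> bool}) label_prob eta y * Psi_eval Psi s y.

End Defs.

From HB Require Import structures.
From mathcomp Require Import all_boot all_order all_algebra all_fingroup.
From mathcomp Require Import lra ring.
Set Implicit Arguments. Unset Strict Implicit. Unset Printing Implicit Defensive.
Import Order.TTheory GRing.Theory Num.Theory.
Local Open Scope ring_scope.

(* Exchange argument.  If s* keeps j out and i in although eta_j > eta_i,
   swapping the predictions at i and j changes the utility by
   (eta_j - eta_i) * sum over the labellings y with y_i = 1, y_j = 0 of
   P(rest of y) * (Psi(s*, y) - Psi(s*, y with y_i, y_j swapped)).
   Swapping y_i and y_j keeps v and p and lowers TP by 1/n, so TP monotonicity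
   makes every summand nonnegative, and one labelling of positive probability
   makes the sum positive: s* was not a maximizer. *)

Lemma psumr_gt0 (R : numDomainType) (I : finType) (P : pred I) (F : I -> R) i0 :
  (forall i, P i -> 0 <= F i) -> P i0 -> 0 < F i0 -> 0 < \sum_(i | P i) F i.
Proof.
move=> F_ge0 Pi0 Fi0_gt0; rewrite lt0r sumr_ge0 // psumr_neq0 // andbT.
by apply/hasP; exists i0; rewrite ?mem_index_enum ?Pi0.
Qed.

Section Relabelling.
Variable n : nat.
Implicit Types s y : {ffun 'I_n -> bool}.

Definition relabel (sigma : {perm 'I_n}) (y : {ffun 'I_n -> bool}) :=
  [ffun k => y (sigma k)].

Lemma sum_relabel (V : nmodType) sigma (F : bool -> bool -> V) s y :
  \sum_(k < n) F (relabel sigma s k) (y k)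
  = \sum_(k < n) F (s k) (relabel sigma^-1 y k).
Proof.
rewrite (reindex_inj (@perm_inj _ sigma^-1)) /=.
by apply: eq_bigr => k _; rewrite !ffunE permKV.
Qed.

Lemma Psi_eval_relabel (R : realFieldType) (Psi : metric R) sigma s y :
  Psi_eval Psi (relabel sigma s) y = Psi_eval Psi s (relabel sigma^-1 y).
Proof.
rewrite /Psi_eval /TPhat /TNhat /FPhat /FNhat.
rewrite (sum_relabel _ (fun a b => (a && b)%:R)).
rewrite (sum_relabel _ (fun a b => (~~ a && ~~ b)%:R)).
rewrite (sum_relabel _ (fun a b => (a && ~~ b)%:R)).
by rewrite (sum_relabel _ (fun a b => (~~ a && b)%:R)).
Qed.

Variables i j : 'I_n.

Local Notation swap := (relabel (tperm i j)).

Lemma swapK : involutive swap.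
Proof. by move=> y; apply/ffunP => k; rewrite !ffunE tpermK. Qed.

Lemma swap_inj : injective swap.
Proof. exact: inv_inj swapK. Qed.

Lemma swap_id y : y i = y j -> swap y = y.
Proof. by move=> yij; apply/ffunP => k; rewrite ffunE; case: tpermP => [->|->|] //. Qed.

Lemma swapE_ij y : (swap y i, swap y j) = (y j, y i).
Proof. by rewrite !ffunE tpermL tpermR. Qed.

Lemma sum_swap_pairs (V : zmodType) (F : {ffun 'I_n -> bool} -> V) :
  (forall y, y i = y j -> F y = 0) ->
  \sum_y F y = \sum_(y : {ffun 'I_n -> bool} | y i && ~~ y j) (F y + F (swap y)).
Proof.
move=> F0; rewrite big_split [LHS](bigID (fun y => y i && ~~ y j)) /=.
congr (_ + _); rewrite (bigID (fun y => ~~ y i && y j)) /=.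
rewrite [X in _ + X]big1 ?addr0.
  rewrite (reindex_inj swap_inj) /=; apply: eq_big => // y.
  by case: (swapE_ij y) => -> ->; case: (y i); case: (y j).
move=> y /andP[yij yji]; apply: F0.
by move: yij yji; case: (y i); case: (y j).
Qed.

End Relabelling.

Section ConfusionMatrix.
Variables (R : realFieldType) (n : nat).
Hypothesis n_gt0 : (0 < n)%N.
Implicit Types s y : {ffun 'I_n -> bool}.

Definition frac (b : 'I_n -> bool) : R := (n%:R)^-1 * \sum_(k < n) (b k)%:R.

Lemma frac_in01 b : in01 (frac b).
Proof.
have n_gt0R : (0 : R) < n%:R by rewrite ltr0n.
have sum_le_n : \sum_(k < n) (b k)%:R <= (n%:R : R).
  rewrite -[X in _ <= X%:R](card_ord n) -sumr_const.
  by apply: ler_sum => k _; case: (b k).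
apply/andP; split; first by rewrite mulr_ge0 ?invr_ge0 ?sumr_ge0.
by rewrite ler_pdivrMl // mulr1.
Qed.

Lemma frac_relabel sigma y : frac (relabel sigma y) = frac y.
Proof.
rewrite /frac (reindex_inj (@perm_inj _ sigma^-1)) /=.
by congr (_ * _); apply: eq_bigr => k _; rewrite ffunE permKV.
Qed.

Lemma fracB (b c d : 'I_n -> bool) :
  (forall k, (b k)%:R - (c k)%:R = (d k)%:R :> R) -> frac b - frac c = frac d.
Proof. by move=> bcd; rewrite /frac -mulrBr -sumrB; under eq_bigr do rewrite bcd. Qed.

Lemma frac_neg (b : 'I_n -> bool) : 1 - frac b = frac (fun k => ~~ b k).
Proof.
have nR : (n%:R : R) != 0 by rewrite pnatr_eq0 -lt0n.
rewrite /frac -[X in X - _](mulVf nR) -mulrBr -[X in _ * (X%:R - _)](card_ord n).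
rewrite -sumr_const -sumrB; congr (_ * _).
by apply: eq_bigr => k _; case: (b k) => /=; lra.
Qed.

Lemma FPhatE s y : FPhat R s y = frac s - TPhat R s y.
Proof. by symmetry; apply: fracB => k; case: (s k); case: (y k) => /=; lra. Qed.

Lemma FNhatE s y : FNhat R s y = frac y - TPhat R s y.
Proof. by symmetry; apply: fracB => k; case: (s k); case: (y k) => /=; lra. Qed.

Lemma TNhatE s y :
  TNhat R s y = 1 - frac s - frac y + TPhat R s y.
Proof.
rewrite (_ : _ + _ = 1 - frac s - (frac y - TPhat R s y)); last by ring.
rewrite -FNhatE frac_neg; symmetry.
by apply: fracB => k; case: (s k); case: (y k) => /=; lra.
Qed.

Lemma Psi_evalE (Psi : metric R) s y :
  Psi_eval Psi s y = Phi Psi (TPhat R s y) (frac s) (frac y).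
Proof. by rewrite /Psi_eval /Phi TNhatE FPhatE FNhatE. Qed.

Lemma valid_confusion s y :
  valid_uvp (TPhat R s y) (frac s) (frac y).
Proof. by rewrite /valid_uvp -TNhatE -FPhatE -FNhatE; split; apply: frac_in01. Qed.

Lemma TPhat_swap s y (i j : 'I_n) :
  i != j -> s i -> ~~ s j -> y i -> ~~ y j ->
  TPhat R s y = TPhat R s (relabel (tperm i j) y) + (n%:R)^-1.
Proof.
move=> ij si sj yi yj; rewrite /TPhat -[X in _ + X]mulr1 -mulrDr; congr (_ * _).
rewrite [in RHS](bigD1 i) //= [in LHS](bigD1 i) //= !ffunE tpermL si yi (negbTE yj).
rewrite addrC; congr (_ + _); rewrite add0r; apply: eq_bigr => k ki.
rewrite ffunE; case: (eqVneq k j) => [->|kj]; first by rewrite (negbTE sj).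
by rewrite tpermD // eq_sym.
Qed.

Lemma Psi_eval_swap_lt (Psi : metric R) s y (i j : 'I_n) :
  TP_monotonic Psi -> i != j -> s i -> ~~ s j -> y i -> ~~ y j ->
  Psi_eval Psi s (relabel (tperm i j) y) < Psi_eval Psi s y.
Proof.
move=> mono ij si sj yi yj; rewrite !Psi_evalE frac_relabel.
have valid_swap := valid_confusion s (relabel (tperm i j) y).
rewrite frac_relabel in valid_swap.
apply: mono => //; try apply: frac_in01; try apply: valid_confusion.
by rewrite [X in _ < X](TPhat_swap ij) // ltrDl invr_gt0 ltr0n.
Qed.

End ConfusionMatrix.

Section LabelProbability.
Variables (R : realFieldType) (n : nat) (eta : 'I_n -> R).
Hypothesis eta01 : forall k, 0 <= eta k <= 1.
Variables i j : 'I_n.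
Hypothesis ij : i != j.
Implicit Types y : {ffun 'I_n -> bool}.

Definition bernoulli_prob (a : R) (b : bool) := if b then a else 1 - a.

Definition rest_prob y : R :=
  \prod_(k < n | (k != i) && (k != j)) bernoulli_prob (eta k) (y k).

Lemma label_prob_split y :
  label_prob eta y =
    bernoulli_prob (eta i) (y i) * bernoulli_prob (eta j) (y j) * rest_prob y.
Proof. by rewrite /label_prob (bigD1 i) //= (bigD1 j) 1?eq_sym //= mulrA. Qed.

Lemma rest_prob_swap y : rest_prob (relabel (tperm i j) y) = rest_prob y.
Proof. by apply: eq_bigr => k /andP[ki kj]; rewrite ffunE tpermD // eq_sym. Qed.

Lemma label_prob_swap_sub y : y i -> ~~ y j ->
  label_prob eta (relabel (tperm i j) y) - label_prob eta y
  = (eta j - eta i) * rest_prob y.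
Proof.
move=> yi yj; rewrite !label_prob_split rest_prob_swap.
have [-> ->] := swapE_ij i j y; rewrite yi (negbTE yj) /bernoulli_prob; ring.
Qed.

Lemma rest_prob_ge0 y : 0 <= rest_prob y.
Proof. by apply: prodr_ge0 => k _; have := eta01 k; case: (y k) => /=; lra. Qed.

Lemma rest_prob_gt0 y : (forall k, k != i -> k != j -> y k = (0 < eta k)) ->
  0 < rest_prob y.
Proof.
move=> yE; apply: prodr_gt0 => k /andP[ki kj]; rewrite yE //.
rewrite /bernoulli_prob; case: ifPn => //; rewrite -leNgt => eta_le0.
by have /andP[] := eta01 k; lra.
Qed.

End LabelProbability.

Lemma utility_swap_sub (R : realFieldType) n (Psi : metric R) (eta : 'I_n -> R)
    (i j : 'I_n) (s : {ffun 'I_n -> bool}) : i != j ->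
  utility Psi eta (relabel (tperm i j) s) - utility Psi eta s
  = \sum_(y : {ffun 'I_n -> bool} | y i && ~~ y j)
      (eta j - eta i) * rest_prob eta i j y *
      (Psi_eval Psi s y - Psi_eval Psi s (relabel (tperm i j) y)).
Proof.
move=> ij.
have Psi_swap y :
    Psi_eval Psi (relabel (tperm i j) s) y = Psi_eval Psi s (relabel (tperm i j) y).
  by rewrite Psi_eval_relabel tpermV.
rewrite /utility (eq_bigr _ (fun y _ => congr1 _ (Psi_swap y))).
rewrite (reindex_inj (@swap_inj _ i j)) -sumrB.
under eq_bigr do rewrite swapK -mulrBl.
rewrite (sum_swap_pairs (i := i) (j := j)) => [|y yij]; last first.
  by rewrite swap_id ?subrr ?mul0r.
apply: eq_bigr => y /andP[yi yj].
rewrite swapK; have := label_prob_swap_sub eta ij yi yj.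
by move=> /eqP; rewrite subr_eq => /eqP ->; ring.
Qed.

Theorem theorem1 (R : realFieldType) (n : nat) (Psi : metric R) :
  (0 < n)%N ->
  metric_nonneg Psi ->
  TP_monotonic Psi ->
  forall (eta : 'I_n -> R), (forall i, 0 <= eta i <= 1) ->
  forall s_star : {ffun 'I_n -> bool},
    (forall s : {ffun 'I_n -> bool}, utility Psi eta s <= utility Psi eta s_star) ->
    (* min{eta_i : s*_i = 1} >= max{eta_j : s*_j = 0} *)
    forall i j : 'I_n, s_star i -> ~~ s_star j -> eta j <= eta i.
Proof.
move=> n_gt0 _ mono eta eta01 s s_max i j si sj.
have ij : i != j by apply: contraTneq si => ->.
rewrite leNgt; apply/negP => eta_ij.
have := s_max (relabel (tperm i j) s); apply/negP; rewrite -ltNge -subr_gt0.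
rewrite utility_swap_sub //.
have gain_gt0 (y : {ffun 'I_n -> bool}) : y i -> ~~ y j ->
    0 < Psi_eval Psi s y - Psi_eval Psi s (relabel (tperm i j) y).
  by move=> yi yj; rewrite subr_gt0 Psi_eval_swap_lt.
pose y0 : {ffun 'I_n -> bool} :=
  [ffun k => if k == i then true else if k == j then false else 0 < eta k].
have y0i : y0 i by rewrite ffunE eqxx.
have y0j : ~~ y0 j by rewrite ffunE eq_sym (negbTE ij) eqxx.
apply: (psumr_gt0 (i0 := y0)) => [y /andP[yi yj]||].
- apply: mulr_ge0; last exact/ltW/gain_gt0.
  by rewrite mulr_ge0 ?rest_prob_ge0 // subr_ge0 ltW.
- by rewrite y0i y0j.
- rewrite mulr_gt0 ?gain_gt0 // mulr_gt0 ?subr_gt0 //.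
  by apply: rest_prob_gt0 => // k ki kj; rewrite ffunE (negbTE ki) (negbTE kj).
Qed.
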